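(* The Recursive Measure satisfies the added-blocker postulate. For every SVG $\mathcal{G}=(N,\mathcal{W})$ and all $i,j\in N$ with $j$ not a dummy in $\mathcal{G}$: $$\frac{RM'^+_i(\mathcal{G})}{RM'^+_j(\mathcal{G})}=\frac{RM'^+_i(\mathcal{G}^Y)}{RM'^+_j(\mathcal{G}^Y)}\qquad\text{and}\qquad\frac{RM'^-_i(\mathcal{G})}{RM'^-_j(\mathcal{G})}=\frac{RM'^-_i(\mathcal{G}^N)}{RM'^-_j(\mathcal{G}^N)}.$$
   Context: A simple voting game (SVG) is a pair $\mathcal{G}=(N,\mathcal{W})$ with $N$ a nonempty finite set of players and $\mathcal{W}\subseteq 2^N$ monotone, $\emptyset\notin\mathcal{W}$, $N\in\mathcal{W}$. Divisions are identified with their YES-sets. Decisiveness and success: - Player $k$ is YES-decisive in $S$ if $k\in S\in\mathcal{W}$ and $S\setminus\{k\}\notin\mathcal{W}$. - Player $k$ is NO-decisive in $S$ if $k\notin S\notin\mathcal{W}$ and $S\cup\{k\}\in\mathcal{W}$. - A dummy is never decisive. - Player $k$ is successful in $S$ if ($k\in S\in\mathcal{W}$) or ($k\notin S\notin\mathcal{W}$). Loyal children: if $S\in\mathcal{W}$, they are the sets $S\setminus\{m\}\in\mathcal{W}$ with $m\in S$. If $S\notin\mathcal{W}$, they are the sets $S\cup\{m\}\notin\mathcal{W}$ with $m\notin S$. Recursive efficacy score $\alpha_k(S)$: - $\alpha_k(S)=1$ if $k$ is decisive; - $\alpha_k(S)=0$ if $k$ is not successful; - otherwise, the average of $\alpha_k$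 over the loyal children. For a game with $m$ players: - the a priori RM YES-power is $RM'^+_k=2^{-m}\sum_{S\ni k}\alpha_k(S)$; - the a priori RM NO-power is $RM'^-_k=2^{-m}\sum_{S\not\ni k}\alpha_k(S)$. For a new player $0\notin N$: - $\mathcal{G}^Y=(N\cup\{0\},\{S\cup\{0\}:S\in\mathcal{W}\})$; - $\mathcal{G}^N=(N\cup\{0\},\{S\cup\{0\}:S\subseteq N\}\cup\mathcal{W})$. *)

From mathcomp Require Import all_boot all_order all_algebra.
Set Implicit Arguments. Unset Strict Implicit. Unset Printing Implicit Defensive.
Import Order.TTheory GRing.Theory Num.Theory.
Local Open Scope ring_scope.

Section SVG.
Variable T : finType.
(* A game is given by its set of winning coalitions W (as a boolean
   predicate on coalitions); the SVG axioms are hypotheses of the theorem. *)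
Variable W : {set T} -> bool.

Definition yes_decisive (k : T) (S : {set T}) : bool :=
  [&& k \in S, W S & ~~ W (S :\ k)].
Definition no_decisive (k : T) (S : {set T}) : bool :=
  [&& k \notin S, ~~ W S & W (k |: S)].
Definition decisive (k : T) (S : {set T}) : bool :=
  yes_decisive k S || no_decisive k S.
Definition successful (k : T) (S : {set T}) : bool :=
  ((k \in S) && W S) || ((k \notin S) && ~~ W S).

Definition dummy (k : T) : Prop := forall S : {set T}, ~~ decisive k S.

Definition loyal_children (S : {set T}) : seq {set T} :=
  if W S then [seq S :\ m | m <- enum S & W (S :\ m)]
  else [seq m |: S | m <- enum (~: S) & ~~ W (m |: S)].

(* The recursion is well founded (winning children shrink, losing children
   grow); we implement it with fuel, #|T|.+1 being always sufficient. *)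
Fixpoint alpha_fuel (n : nat) (k : T) (S : {set T}) : rat :=
  match n with
  | 0 => 0
  | n'.+1 =>
    if decisive k S then 1
    else if ~~ successful k S then 0
    else let ch := loyal_children S in
         (\sum_(U <- ch) alpha_fuel n' k U) / (size ch)%:R
  end.

Definition alpha (k : T) (S : {set T}) : rat := alpha_fuel #|T|.+1 k S.

Definition RM_yes (k : T) : rat :=
  (\sum_(S : {set T} | k \in S) alpha k S) / (2 ^ #|T|)%:R.
Definition RM_no (k : T) : rat :=
  (\sum_(S : {set T} | k \notin S) alpha k S) / (2 ^ #|T|)%:R.

End SVG.

(* The new player 0 is None : option T. *)
Definition addY (T : finType) (W : {set T} -> bool) : {set option T} -> bool :=
  fun S => (None \in S) && W [set x | Some x \in S].
Definition addN (T : finType) (W : {set T} -> bool) : {set option T} -> bool :=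
  fun S => (None \in S) || W [set x | Some x \in S].

From mathcomp Require Import all_boot all_order all_algebra.
Import GRing.Theory Num.Theory.
Local Open Scope ring_scope.

(* A coalition S of G is embedded in G^Y as S ∪ {0} and in G^N as S itself.
   Embedded coalitions behave exactly like the originals (same decisiveness,
   success and loyal children, since moving the new player is never loyal),
   so they carry the same α.  Every other coalition is losing in G^Y and
   winning in G^N, so an old player voting YES there (G^Y), resp. NO (G^N),
   is unsuccessful and has α = 0.  Hence RM'^+ in G^Y and RM'^- in G^N are exactly half the old
   values and all ratios are preserved. *)

Lemma sum_option (R : nmodType) (T : finType) (F : option T -> R) :
  \sum_(o : option T) F o = F None + \sum_(x : T) F (Some x).
Proof.
rewrite (bigD1 None) //=; congr (_ + _).
rewrite (reindex_omap Some id) => [|[x|] //].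
by apply: eq_bigl => x; rewrite eqxx.
Qed.

Section Recursion.
Variables (T : finType) (W : {set T} -> bool).

Lemma decisive_successful k S : decisive W k S -> successful W k S.
Proof.
by rewrite /decisive /yes_decisive /no_decisive /successful =>
  /orP[/and3P[-> -> _] | /and3P[-> -> _]]; rewrite ?orbT.
Qed.

Lemma alpha_fuel_unsuccessful n k S :
  ~~ successful W k S -> alpha_fuel W n k S = 0.
Proof.
case: n => [//|n] /= Hs.
by rewrite (negbTE (contra (@decisive_successful k S) Hs)) Hs.
Qed.

(* Loyal children of a winning coalition lose a member and those of a losing
   one gain a member, so this is a termination measure for [alpha_fuel]. *)
Definition height (S : {set T}) : nat := if W S then #|S| else #|~: S|.

Lemma height_le_card S : (height S <= #|T|)%N.
Proof. by rewrite /height; case: (W S); apply: max_card. Qed.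

Lemma height_loyal_child S U :
  U \in loyal_children W S -> (height U < height S)%N.
Proof.
rewrite /loyal_children /height; case: (W S) => /mapP[m];
  rewrite mem_filter mem_enum => /andP[HU Hm] ->.
- by rewrite HU (cardsD1 m S) Hm.
- rewrite (negbTE HU) (cardsD1 m (~: S)) Hm.
  by rewrite setCU setIC -setDE.
Qed.

Lemma alpha_fuel_stable n m k S :
  (height S < n)%N -> (height S < m)%N ->
  alpha_fuel W n k S = alpha_fuel W m k S.
Proof.
elim: n m S => [|n IH] [|m] S //= Hn Hm.
case: ifP => // _; case: ifP => // _.
congr (_ / _); apply: eq_big_seq => U /height_loyal_child HU.
by apply: IH; apply: leq_trans HU _.
Qed.

Lemma alpha_fuelE n k S : (#|T| < n)%N -> alpha_fuel W n k S = alpha W k S.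
Proof.
move=> Hn; apply: alpha_fuel_stable; last by rewrite ltnS height_le_card.
exact: leq_ltn_trans (height_le_card S) Hn.
Qed.

End Recursion.

Section Transport.
Context {T1 T2 : finType} {W1 : {set T1} -> bool} {W2 : {set T2} -> bool}.
Context {f : {set T1} -> {set T2}} {k1 : T1} {k2 : T2}.
Hypothesis decisive_f : forall S, decisive W2 k2 (f S) = decisive W1 k1 S.
Hypothesis successful_f : forall S, successful W2 k2 (f S) = successful W1 k1 S.
Hypothesis loyal_children_f : forall S (G : {set T2} -> rat),
  \sum_(U <- loyal_children W2 (f S)) G U =
  \sum_(U <- loyal_children W1 S) G (f U).

Lemma alpha_fuel_transport n S :
  alpha_fuel W2 n k2 (f S) = alpha_fuel W1 n k1 S.
Proof.
elim: n S => [//|n IH] S /=.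
rewrite decisive_f successful_f; case: ifP => // _; case: ifP => // _.
rewrite -!sum1_size !natr_sum !loyal_children_f.
by congr (_ / _); apply: eq_bigr => U _; apply: IH.
Qed.

End Transport.

(* The games addY and addN both have this shape: with b = true the new player
   is needed to win (G^Y), with b = false it alone already wins (G^N). *)
Section AddedPlayer.
Context {T : finType} {W : {set T} -> bool} {b : bool}.
Context {W' : {set option T} -> bool}.
Hypothesis W'E : forall S' : {set option T},
  W' S' = if (None \in S') == b then W [set x | Some x \in S'] else ~~ b.

Definition lift_coalition (S : {set T}) : {set option T} :=
  [set o | if o is Some x then x \in S else b].

Local Notation lift := lift_coalition.

Lemma mem_lift_Some x S : (Some x \in lift S) = (x \in S).
Proof. by rewrite inE. Qed.

Lemma mem_lift_None S : (None \in lift S) = b.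
Proof. by rewrite inE. Qed.

Lemma lift_coalitionK S : [set x | Some x \in lift S] = S.
Proof. by apply/setP => x; rewrite !inE. Qed.

Lemma W'_lift S : W' (lift S) = W S.
Proof. by rewrite W'E mem_lift_None eqxx lift_coalitionK. Qed.

Lemma lift_setD1 S x : lift S :\ Some x = lift (S :\ x).
Proof. by apply/setP => -[y|]; rewrite !inE. Qed.

Lemma lift_setU1 S x : Some x |: lift S = lift (x |: S).
Proof. by apply/setP => -[y|]; rewrite !inE. Qed.

Lemma decisive_lift k S : decisive W' (Some k) (lift S) = decisive W k S.
Proof.
by rewrite /decisive /yes_decisive /no_decisive mem_lift_Some
  lift_setD1 lift_setU1 !W'_lift.
Qed.

Lemma successful_lift k S : successful W' (Some k) (lift S) = successful W k S.
Proof. by rewrite /successful mem_lift_Some !W'_lift. Qed.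

(* Toggling the new player is never loyal: it turns a winning G^Y-coalition
   into a losing one, and a losing G^N-coalition into a winning one. *)
Lemma loyal_children_lift S (G : {set option T} -> rat) :
  \sum_(U <- loyal_children W' (lift S)) G U =
  \sum_(U <- loyal_children W S) G (lift U).
Proof.
rewrite /loyal_children W'_lift; case: (W S);
  rewrite !big_map !big_filter !big_enum_cond big_mkcond sum_option
    [RHS]big_mkcond ?in_setC mem_lift_None.
- have -> : b && W' (lift S :\ None) = false.
    by case: b W'E => // ->; rewrite !inE eqxx.
  rewrite add0r; apply: eq_bigr => x _.
  by rewrite mem_lift_Some lift_setD1 W'_lift.
- have -> : ~~ b && ~~ W' (None |: lift S) = false.
    by case: b W'E => // ->; rewrite !inE eqxx.
  rewrite add0r; apply: eq_bigr => x _.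
  by rewrite !in_setC mem_lift_Some lift_setU1 W'_lift.
Qed.

Lemma alpha_lift k S : alpha W' (Some k) (lift S) = alpha W k S.
Proof.
rewrite /alpha card_option.
by rewrite (alpha_fuel_transport (decisive_lift k)
  (successful_lift k) loyal_children_lift) alpha_fuelE.
Qed.

Lemma sum_alpha_lift k :
  \sum_(S' : {set option T} | (Some k \in S') == b) alpha W' (Some k) S' =
  \sum_(S : {set T} | (k \in S) == b) alpha W k S.
Proof.
rewrite (bigID (fun S' : {set option T} => (None \in S') == b)) /=.
rewrite [X in _ + X]big1 ?addr0 => [|S' /andP[Hk HN]]; last first.
  apply: alpha_fuel_unsuccessful; rewrite /successful W'E (negbTE HN).
  by case: b Hk; case: (Some k \in S').
rewrite (reindex_onto lift (fun S' => [set x | Some x \in S'])) /=.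
  apply: eq_big => [S|S _]; last exact: alpha_lift.
  by rewrite mem_lift_Some mem_lift_None lift_coalitionK !eqxx !andbT.
move=> S' /andP[_ HN]; apply/setP => -[x|]; rewrite !inE //.
by rewrite (eqP HN).
Qed.

Lemma sum_alpha_lift_scaled k :
  (\sum_(S' : {set option T} | (Some k \in S') == b) alpha W' (Some k) S') /
    (2 ^ #|{: option T}|)%:R =
  (\sum_(S : {set T} | (k \in S) == b) alpha W k S) / (2 ^ #|T|)%:R / 2.
Proof. by rewrite sum_alpha_lift card_option expnSr natrM invfM mulrA. Qed.

End AddedPlayer.

Lemma RM_yes_addY (T : finType) (W : {set T} -> bool) k :
  RM_yes (addY W) (Some k) = RM_yes W k / 2.
Proof.
have addYE S' : addY W S' =
    if (None \in S') == true then W [set x | Some x \in S'] else ~~ true.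
  by rewrite /addY eqb_id; case: (None \in S').
rewrite /RM_yes; under eq_bigl do rewrite -[_ \in _]eqb_id.
rewrite (sum_alpha_lift_scaled addYE).
by under eq_bigl do rewrite eqb_id.
Qed.

Lemma RM_no_addN (T : finType) (W : {set T} -> bool) k :
  RM_no (addN W) (Some k) = RM_no W k / 2.
Proof.
have addNE S' : addN W S' =
    if (None \in S') == false then W [set x | Some x \in S'] else ~~ false.
  by rewrite /addN eqbF_neg; case: (None \in S').
rewrite /RM_no; under eq_bigl do rewrite -eqbF_neg.
rewrite (sum_alpha_lift_scaled addNE).
by under eq_bigl do rewrite eqbF_neg.
Qed.

(* The SVG axioms and the non-dummy hypothesis are not needed: both powers
   scale by exactly 1/2, and in rat a ratio with zero denominator is 0. *)
Theorem theorem9 (T : finType) (W : {set T} -> bool)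
  (Hmono : forall S U : {set T}, S \subset U -> W S -> W U)
  (H0 : ~~ W set0) (HT : W setT)
  (i j : T) (Hj : ~ dummy W j) :
  RM_yes W i / RM_yes W j = RM_yes (addY W) (Some i) / RM_yes (addY W) (Some j)
  /\
  RM_no W i / RM_no W j = RM_no (addN W) (Some i) / RM_no (addN W) (Some j).
Proof.
have halves_ratio (x y : rat) : x / 2 / (y / 2) = x / y.
  by rewrite invf_div mulrA divfK.
by rewrite !RM_yes_addY !RM_no_addN !halves_ratio.
Qed.
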